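(* For every even $m\ge 2$ and every $n\ge 2$, the $m$th order $n$-dimensional Pascal tensor is positive definite.
   Context: The $m$th order $n$-dimensional Pascal tensor is $\mathcal{P}=(p_{i_1\dots i_m})$ with $p_{i_1\dots i_m}=\frac{(i_1+\dots+i_m-m)!}{(i_1-1)!\cdots(i_m-1)!}$ for $i_1,\dots,i_m\in\{1,\dots,n\}$ (for $m=2$ this is the symmetric Pascal matrix). For $m$ even, a symmetric tensor $\mathcal{A}$ is positive definite if $\mathcal{A}\mathbf{x}^m=\sum_{i_1,\dots,i_m}a_{i_1\dots i_m}x_{i_1}\cdots x_{i_m}>0$ for all nonzero $\mathbf{x}\in\mathbb{R}^n$. *)

From HB Require Import structures.
From mathcomp Require Import all_boot all_order all_fingroup all_algebra.
Set Implicit Arguments. Unset Strict Implicit. Unset Printing Implicit Defensive.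
Import Order.TTheory GRing.Theory Num.Theory.
Local Open Scope ring_scope.

(* Indices are 0-based: the paper's index i_k in {1..n} corresponds to
   the ordinal (i_k - 1) in 'I_n. *)
Definition tensor (R : Type) (m n : nat) := {ffun 'I_m -> 'I_n} -> R.

Definition symmetric_tensor (R : Type) (m n : nat) (A : tensor R m n) : Prop :=
  forall (s : {perm 'I_m}) (idx : {ffun 'I_m -> 'I_n}),
    A [ffun k => idx (s k)] = A idx.

Definition tensor_form (R : nzRingType) (m n : nat) (A : tensor R m n)
  (x : 'I_n -> R) : R :=
  \sum_(idx : {ffun 'I_m -> 'I_n}) A idx * \prod_(k < m) x (idx k).

Definition positive_definite (R : realFieldType) (m n : nat)
  (A : tensor R m n) : Prop :=
  symmetric_tensor A /\
  forall x : 'I_n -> R, (exists i, x i != 0) -> 0 < tensor_form A x.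

(* Pascal tensor: with 0-based indices j_k = i_k - 1,
   p = (j_1 + ... + j_m)! / (j_1! ... j_m!). *)
Definition pascal_tensor (R : realFieldType) (m n : nat) : tensor R m n :=
  fun idx => ((\sum_(k < m) (idx k : nat))`!)%:R /
             (\prod_(k < m) ((idx k : nat)`!)%:R).
Arguments pascal_tensor R m n idx : clear implicits.

(* Put y_i = x_i / i! and F(t) = \sum_i y_i t^i.  By the multinomial theorem the
   Pascal form is L(F^m), where L is the linear functional t^s |-> s!.  For even m,
   F^m = h^2 with h = F^(m/2), and L(h^2) = \sum_(a,b) h_a h_b (a+b)!.  Vandermonde's
   identity factors this Hankel matrix of factorials as a Gram matrix,
   (a+b)! = \sum_i (a! C(a,i)) (b! C(b,i)), whose rows are lower triangular with
   nonzero diagonal; so L(h^2) is a sum of squares whose last one, (h_d d!)^2 for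
   d = deg h, is positive. *)

From HB Require Import structures.
From mathcomp Require Import all_boot all_order all_fingroup all_algebra.
From mathcomp Require Import ring.
Set Implicit Arguments.
Unset Strict Implicit.
Unset Printing Implicit Defensive.

Import Order.TTheory GRing.Theory Num.Theory.
Local Open Scope ring_scope.

Lemma bin_addn_sum (a b K : nat) : (a < K)%N ->
  'C(a + b, a) = (\sum_(i < K) 'C(a, i) * 'C(b, i))%N.
Proof.
move=> aK; rewrite -binomial.Vandermonde (reindex_inj rev_ord_inj) /=.
transitivity (\sum_(i < a.+1) 'C(a, i) * 'C(b, i))%N.
  by apply: eq_bigr => i _; rewrite subSS subKn ?bin_sub // -ltnS.
rewrite (big_ord_widen K (fun i => 'C(a, i) * 'C(b, i))%N aK) big_mkcond /=.
apply: eq_bigr => i _; case: ifPn => //; rewrite -leqNgt => ai.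
by rewrite bin_small.
Qed.

Lemma fact_addn_sum (a b K : nat) : (a < K)%N ->
  ((a + b)`! = \sum_(i < K) (a`! * 'C(a, i)) * (b`! * 'C(b, i)))%N.
Proof.
move=> aK; rewrite -(bin_fact (leq_addr b a)) addKn (bin_addn_sum b aK).
rewrite big_distrl /=; apply: eq_bigr => i _.
by rewrite mulnACA [('C(a, i) * _)%N]mulnC [('C(b, i) * _)%N]mulnC.
Qed.

Lemma sum_sqr_gram (R : comNzRingType) (I J : finType) (u : I -> R)
    (M : I -> J -> R) :
  \sum_a \sum_b u a * u b * \sum_i M a i * M b i
  = \sum_i (\sum_a u a * M a i) ^+ 2.
Proof.
transitivity (\sum_a \sum_b \sum_i (u a * M a i) * (u b * M b i)).
  apply: eq_bigr => a _; apply: eq_bigr => b _.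
  by rewrite mulr_sumr; apply: eq_bigr => i _; ring.
under eq_bigr do rewrite exchange_big /=.
rewrite exchange_big /=; apply: eq_bigr => i _.
by rewrite expr2 mulr_suml; apply: eq_bigr => a _; rewrite mulr_sumr.
Qed.

Lemma prod_scaleXn (R : comNzRingType) (I : finType) (c : I -> R) (e : I -> nat) :
  \prod_k (c k *: 'X^(e k)) = (\prod_k c k) *: 'X^(\sum_k e k).
Proof.
under eq_bigr do rewrite -mul_polyC.
by rewrite big_split /= -rmorph_prod prodrXr mul_polyC.
Qed.

(* The functional p |-> \int_0^oo p(t) e^-t dt, which sends t^s to s!,
   restricted to the coefficients of degree < N. *)
Definition fact_moment (R : nzRingType) (N : nat) (p : {poly R}) : R :=
  \sum_(s < N) p`_s * (s`!)%:R.

Section FactMoment.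
Variables (R : comNzRingType) (N : nat).

Lemma fact_moment_sum (I : finType) (F : I -> {poly R}) :
  fact_moment N (\sum_i F i) = \sum_i fact_moment N (F i).
Proof.
rewrite /fact_moment; under eq_bigr do rewrite coef_sum mulr_suml.
exact: exchange_big.
Qed.

Lemma fact_moment_scaleXn (c : R) s : (s < N)%N ->
  fact_moment N (c *: 'X^s) = c * (s`!)%:R.
Proof.
move=> sN; rewrite /fact_moment (bigD1 (Ordinal sN)) //= big1 ?addr0.
  by rewrite coefZ coefXn eqxx mulr1.
move=> i /negbTE ne; rewrite coefZ coefXn.
by rewrite -[(i : nat) == s]/(i == Ordinal sN) ne mulr0 mul0r.
Qed.

Lemma fact_moment_sqr (h : {poly R}) : (2 * size h <= N)%N ->
  fact_moment N (h * h) =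
  \sum_(i < size h) (\sum_(a < size h) h`_a * (a`! * 'C(a, i))%:R) ^+ 2.
Proof.
move=> hN; set K := size h.
have hE : h = \sum_(a < K) h`_a *: 'X^a by rewrite -poly_def coefK.
rewrite -sum_sqr_gram [in LHS]hE big_distrl fact_moment_sum.
apply: eq_bigr => a _; rewrite big_distrr fact_moment_sum; apply: eq_bigr => b _.
rewrite /= -scalerAl -scalerAr scalerA -exprD fact_moment_scaleXn; last first.
  by apply: leq_trans hN; rewrite mul2n -addnn -addnS leq_add // ltnW.
by rewrite (fact_addn_sum b (ltn_ord a)) natr_sum; under eq_bigr do rewrite natrM.
Qed.

End FactMoment.

Lemma fact_moment_sqr_gt0 (R : realFieldType) (N : nat) (h : {poly R}) :
  h != 0 -> (2 * size h <= N)%N -> 0 < fact_moment N (h * h).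
Proof.
move=> h_neq0 /fact_moment_sqr ->.
have lead_neq0 : h`_(size h).-1 != 0 by rewrite -lead_coefE lead_coef_eq0.
have : (0 < size h)%N by rewrite size_poly_gt0.
move: lead_neq0; case: (size h) => // d lead_neq0 _.
have last_coord : \sum_(a < d.+1) h`_a * (a`! * 'C(a, d))%:R = h`_d * (d`!)%:R.
  rewrite big_ord_recr /= binn muln1 big1 ?add0r // => a _.
  by rewrite bin_small ?muln0 ?mulr0.
rewrite big_ord_recr /= last_coord ltr_wpDl ?sumr_ge0 // => [i _|]; first exact: sqr_ge0.
by rewrite exprn_even_gt0 //= mulf_neq0 // pnatr_eq0 -lt0n fact_gt0.
Qed.

Definition egf (R : fieldType) (n : nat) (x : 'I_n -> R) : {poly R} :=
  \sum_(i < n) (x i / (i`!)%:R) *: 'X^i.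

Lemma coef_egf (R : fieldType) (n : nat) (x : 'I_n -> R) (i : 'I_n) :
  (egf x)`_i = x i / (i`!)%:R.
Proof.
rewrite coef_sum (bigD1 i) //= coefZ coefXn eqxx mulr1 big1 ?addr0 //.
by move=> j /negbTE ne; rewrite coefZ coefXn -[(i : nat) == j]/(i == j) eq_sym ne mulr0.
Qed.

Lemma egf_neq0 (R : numFieldType) (n : nat) (x : 'I_n -> R) :
  (exists i, x i != 0) -> egf x != 0.
Proof.
case=> i xi_neq0; apply: contraNneq xi_neq0 => egf0.
have := coef_egf x i; rewrite egf0 coef0 => /esym/eqP.
by rewrite mulf_eq0 invr_eq0 pnatr_eq0 eqn0Ngt fact_gt0 orbF.
Qed.

Lemma pascal_tensor_sym (R : realFieldType) (m n : nat) :
  symmetric_tensor (pascal_tensor R m n).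
Proof.
move=> s idx; rewrite /pascal_tensor; congr ((_)`!%:R / _);
  by rewrite [RHS](reindex_inj (@perm_inj _ s)); apply: eq_bigr => k _; rewrite ffunE.
Qed.

Lemma pascal_form_fact_moment (R : realFieldType) (m n N : nat) (x : 'I_n -> R) :
  (m * n < N)%N -> tensor_form (pascal_tensor R m n) x = fact_moment N (egf x ^+ m).
Proof.
move=> mnN; rewrite -[m in egf x ^+ m]card_ord -prodr_const bigA_distr_bigA.
rewrite fact_moment_sum; apply: eq_bigr => idx _.
rewrite prod_scaleXn fact_moment_scaleXn; last first.
  apply: leq_ltn_trans mnN; rewrite -[m in (m * n)%N]card_ord -sum_nat_const.
  by apply: leq_sum => k _; apply: ltnW.
by rewrite /pascal_tensor prodf_div; ring.
Qed.

Theorem theorem2p3 (R : realFieldType) (m n : nat) :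
  ~~ odd m -> (2 <= m)%N -> (2 <= n)%N ->
  positive_definite (pascal_tensor R m n).
Proof.
move=> m_even _ _; split; first exact: pascal_tensor_sym.
move=> x x_neq0; set h := egf x ^+ m./2.
have hh : h * h = egf x ^+ m.
  by rewrite -exprD addnn -[in RHS](odd_double_half m) (negbTE m_even).
rewrite (@pascal_form_fact_moment _ _ _ (2 * size h + m * n).+1) ?ltnS ?leq_addl //.
rewrite -hh fact_moment_sqr_gt0 ?expf_neq0 ?egf_neq0 //.
by rewrite ltnW // ltnS leq_addr.
Qed.
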